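(* Let $\{a_n\}_{n\ge1}$ be a sequence of positive real numbers. Suppose that at least one of the following holds: either $\frac{a_{2n}}{a_n}>1$ for all sufficiently large $n$, or $\frac{a_{2n+1}}{a_n}>1+\frac{1}{2n}$ for all sufficiently large $n$. Then $\sum_{n=1}^\infty a_n$ diverges. *)

From Stdlib Require Import Reals.
Open Scope R_scope.

(* Partial sums of a sequence indexed from 1: S_N = a_1 + ... + a_(N+1). *)
Definition partial_sum1 (a : nat -> R) (N : nat) : R :=
  sum_f_R0 (fun k => a (S k)) N.

Definition series1_converges (a : nat -> R) : Prop :=
  exists l : R, Un_cv (partial_sum1 a) l.

(* The hypotheses say that from every large index n one can jump to a later
   index (2n or 2n+1) carrying a larger term. Iterating such jumps from a
   fixed index N yields arbitrarily late terms at least a_N > 0, so the terms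
   do not tend to 0 and the series cannot converge. *)

From Stdlib Require Import Reals Lra Lia.
Open Scope R_scope.

Lemma partial_sum1_succ (a : nat -> R) (n : nat) :
  partial_sum1 a (S n) = partial_sum1 a n + a (S (S n)).
Proof. reflexivity. Qed.

Lemma series1_converges_terms_cv0 (a : nat -> R) :
  series1_converges a -> Un_cv a 0.
Proof.
  intros [l Hl].
  assert (Hdiff := CV_minus _ _ _ _ (CV_shift' _ 1 _ Hl) Hl).
  apply CV_shift with (k := 2%nat).
  intros eps Heps.
  destruct (Hdiff eps Heps) as [M HM].
  exists M. intros n Hn.
  specialize (HM n Hn).
  unfold R_dist in *.
  rewrite Nat.add_1_r, partial_sum1_succ in HM.
  rewrite Nat.add_succ_r, Nat.add_1_r.
  replace (a (S (S n)) - 0) with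
    (partial_sum1 a n + a (S (S n)) - partial_sum1 a n - (l - l)) by ring.
  exact HM.
Qed.

Section Escaping.

Variables (a : nat -> R) (N : nat).

Hypothesis escape :
  forall n, (N <= n)%nat -> exists m, (n < m)%nat /\ a n <= a m.

Lemma escape_iter (k : nat) : exists j, (N + k <= j)%nat /\ a N <= a j.
Proof.
  induction k as [|k [j [Hj HaNj]]].
  - exists N. split; [lia | lra].
  - destruct (escape j ltac:(lia)) as [m [Hjm Hajm]].
    exists m. split; [lia | lra].
Qed.

Lemma escape_not_cv0 : 0 < a N -> ~ Un_cv a 0.
Proof.
  intros HaN Hcv.
  destruct (Hcv (a N) HaN) as [M HM].
  destruct (escape_iter M) as [j [Hj HaNj]].
  specialize (HM j ltac:(lia)).
  unfold R_dist in HM.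
  rewrite Rminus_0_r, Rabs_right in HM; lra.
Qed.

End Escaping.

Lemma lt_of_div_gt_1 (x y : R) : 0 < x -> y / x > 1 -> x < y.
Proof.
  intros Hx Hyx.
  apply Rmult_gt_compat_r with (r := x) in Hyx; [|exact Hx].
  unfold Rdiv in Hyx. rewrite Rmult_assoc, Rinv_l in Hyx; lra.
Qed.

Theorem corollary2p1p4 (a : nat -> R)
  (hpos : forall n : nat, (1 <= n)%nat -> 0 < a n)
  (hyp : (exists N : nat, forall n : nat, (N <= n)%nat -> (1 <= n)%nat ->
            a (2 * n)%nat / a n > 1)
      \/ (exists N : nat, forall n : nat, (N <= n)%nat -> (1 <= n)%nat ->
            a (2 * n + 1)%nat / a n > 1 + 1 / (2 * INR n))) :
  ~ series1_converges a.
Proof.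
  intros Hconv.
  assert (Hescape : exists N, forall n, (N <= n)%nat -> (1 <= n)%nat ->
                      exists m, (n < m)%nat /\ a n <= a m).
  { destruct hyp as [[N HN] | [N HN]]; exists N; intros n HNn Hn.
    - exists (2 * n)%nat. split; [lia |].
      apply Rlt_le, lt_of_div_gt_1; auto.
    - exists (2 * n + 1)%nat. split; [lia |].
      apply Rlt_le, lt_of_div_gt_1; [auto |].
      assert (0 < 1 / (2 * INR n)).
      { apply Rdiv_lt_0_compat; [lra |].
        assert (0 < INR n) by (apply lt_0_INR; lia). lra. }
      specialize (HN n HNn Hn). lra. }
  destruct Hescape as [N HN].
  apply (escape_not_cv0 a (Nat.max N 1)).
  - intros n Hn. apply HN; lia.
  - apply hpos; lia.
  - exact (series1_converges_terms_cv0 a Hconv).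
Qed.
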